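(* Let $\Sigma$ be a finite alphabet, let $y^* = y^*_1 \cdots y^*_n \in \Sigma^*$, let $p \in \Sigma^*$, and let $m(p) = \min_{0 \le j \le n} D(p, y^*_{1..j})$. Then $$\min_{s \in \Sigma^*} D(p\,s,\; y^* ) \;=\; m(p).$$ Moreover, the set of minimizers is exactly $$\{\, s \in \Sigma^* : D(p\,s, y^* ) = m(p)\,\} \;=\; \{\, y^*_{j+1..n} \;:\; 0 \le j \le n,\ D(p, y^*_{1..j}) = m(p) \,\}.$$ In words: the optimal completions of $p$ are exactly the suffixes $y^*_{j+1..n}$ of $y^*$ for which the prefix $y^*_{1..j}$ attains the minimum edit distance to $p$.
   Context: $D(u,v)$ denotes the Levenshtein edit distance between finite strings $u,v$: the minimum number of single-symbol insertions, deletions and substitutions needed to transform $u$ into $v$. For a string $y^*$ of length $n$, $y^*_{1..j}$ denotes its prefix of length $j$ and $y^*_{j+1..n}$ the complementary suffix; $y^*_{1..0}$ and $y^*_{n+1..n}$ are the empty string. Juxtaposition $p\,s$ denotes concatenation. *)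

From mathcomp Require Import all_boot.
Set Implicit Arguments. Unset Strict Implicit. Unset Printing Implicit Defensive.

(* Levenshtein edit distance, via the standard recursion:
   D [] v = |v|, D u [] = |u|,
   D (a::u) (b::v) = min (D u v + [a != b]) (D u (b::v) + 1) (D (a::u) v + 1). *)
Fixpoint lev {T : eqType} (u v : seq T) : nat :=
  match u with
  | [::] => size v
  | a :: u' =>
    let fix levu (v : seq T) : nat :=
      match v with
      | [::] => size u
      | b :: v' => minn (lev u' v' + (a != b)) (minn (lev u' v).+1 (levu v').+1)
      end in levu v
  end.

Definition mpref {T : eqType} (p y : seq T) : nat :=
  \big[minn/lev p y]_(j < (size y).+1) lev p (take j y).

From mathcomp Require Import all_boot.
From mathcomp Require Import zify.

(* An edit script from p ++ s to y splits y at some j into a script from p to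
   y_{1..j} and one from s to y_{j+1..n}, so D(p s, y) >= D(p, y_{1..j}) +
   D(s, y_{j+1..n}) >= m(p), with equality only if s = y_{j+1..n} and
   D(p, y_{1..j}) = m(p).  Conversely, concatenating a script from p to
   y_{1..j} with the empty script on y_{j+1..n} shows
   D(p y_{j+1..n}, y) <= D(p, y_{1..j}). *)

Lemma minn_ind (P : nat -> Prop) m n : P m -> P n -> P (minn m n).
Proof. by rewrite /minn; case: ifP. Qed.

Lemma leq_bigmin {I : eqType} {r : seq I} {P : pred I} {x0} {F : I -> nat} {i} :
  i \in r -> P i -> \big[minn/x0]_(k <- r | P k) F k <= F i.
Proof.
elim: r => //= k r IHr; rewrite inE big_cons => /predU1P[-> -> | /IHr le_r Pi].
  exact: geq_minl.
by case: ifP => _; rewrite ?geq_min (le_r Pi) ?orbT.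
Qed.

Section EditDistance.
Variable T : eqType.
Implicit Types (a b : T) (u v w p s y : seq T).

Lemma lev_nilr u : lev u [::] = size u. Proof. by case: u. Qed.

Lemma lev_cons a u b v : lev (a :: u) (b :: v) =
  minn (lev u v + (a != b)) (minn (lev u (b :: v)).+1 (lev (a :: u) v).+1).
Proof. by []. Qed.

Lemma lev_cons_subst a u b v : lev (a :: u) (b :: v) <= lev u v + (a != b).
Proof. by rewrite lev_cons geq_minl. Qed.

Lemma lev_consl a u v : lev (a :: u) v <= (lev u v).+1.
Proof.
case: v => [|b v]; first by rewrite !lev_nilr.
by rewrite lev_cons; apply: leq_trans (geq_minr _ _) (geq_minl _ _).
Qed.

Lemma lev_consr u b v : lev u (b :: v) <= (lev u v).+1.
Proof.
case: u => [|a u] //.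
by rewrite lev_cons; apply: leq_trans (geq_minr _ _) (geq_minr _ _).
Qed.

Lemma lev_eq0 u v : (lev u v == 0) = (u == v).
Proof.
apply/eqP/eqP => [|<-]; last first.
  elim: u => //= a u IHu; apply/eqP; rewrite -leqn0.
  by apply: leq_trans (lev_cons_subst _ _ _ _) _; rewrite IHu eqxx.
elim: u v => [|a u IHu] [|b v] //; rewrite lev_cons => lev0.
have /eqP : lev u v + (a != b) = 0 by lia.
by rewrite addn_eq0 eqb0 negbK => /andP[/eqP/IHu -> /eqP ->].
Qed.

Lemma leq_lev_cat u1 u2 w1 w2 :
  lev (u1 ++ u2) (w1 ++ w2) <= lev u1 w1 + lev u2 w2.
Proof.
elim: u1 w1 => [|a u1 IHu] w1.
  elim: w1 => [|b w1 IHw] //=.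
  by apply: leq_trans (lev_consr _ _ _) _; rewrite addSn ltnS.
elim: w1 => [|b w1 IHw].
  apply: leq_trans (lev_consl _ _ _) _.
  by have := IHu [::]; rewrite !lev_nilr addSn ltnS.
rewrite [lev (a :: u1) _]lev_cons !addn_minl !leq_min; apply/and3P; split.
- apply: leq_trans (lev_cons_subst _ _ _ _) _.
  by rewrite addnAC leq_add2r IHu.
- by apply: leq_trans (lev_consl _ _ _) _; rewrite addSn ltnS IHu.
- by apply: leq_trans (lev_consr _ _ _) _; rewrite addSn ltnS.
Qed.

Lemma lev_cat_split u v w : exists2 j, j <= size w &
  lev u (take j w) + lev v (drop j w) <= lev (u ++ v) w.
Proof.
elim: u w => [|a u IHu] w; first by exists 0; rewrite ?take0 ?drop0.
elim: w => [|b w IHw]; first by exists 0; rewrite //= lev_nilr size_cat.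
pose P n := exists2 j, j <= size (b :: w) &
  lev (a :: u) (take j (b :: w)) + lev v (drop j (b :: w)) <= n.
rewrite cat_cons lev_cons; apply: (minn_ind P); [|apply: (minn_ind P)].
- have [j le_jw lev_j] := IHu w; exists j.+1; rewrite // take_cons drop_cons.
  have := lev_cons_subst a u b (take j w); lia.
- have [j le_jw lev_j] := IHu (b :: w); exists j => //.
  have := lev_consl a u (take j (b :: w)); lia.
- have [j le_jw] := IHw; rewrite cat_cons => lev_j.
  exists j.+1; rewrite // take_cons drop_cons.
  have := lev_consr (a :: u) b (take j w); lia.
Qed.

Lemma mpref_le p y j : j <= size y -> mpref p y <= lev p (take j y).
Proof.
rewrite -ltnS => lt_jy.
exact: leq_bigmin (mem_index_enum (Ordinal lt_jy)) isT.
Qed.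

Lemma mpref_attained p y : exists2 j, j <= size y & lev p (take j y) = mpref p y.
Proof.
pose P n := exists2 j, j <= size y & lev p (take j y) = n.
apply: (big_ind P).
- by exists (size y); rewrite ?take_size.
- exact: minn_ind.
- by move=> j _; exists j; rewrite // -ltnS ltn_ord.
Qed.

Lemma mpref_le_lev_cat p s y : mpref p y <= lev (p ++ s) y.
Proof.
have [j le_jy lev_j] := lev_cat_split p s y.
exact: leq_trans (mpref_le p y j le_jy) (leq_trans (leq_addr _ _) lev_j).
Qed.

Lemma lev_cat_drop p y j : lev p (take j y) = mpref p y ->
  lev (p ++ drop j y) y = mpref p y.
Proof.
move=> lev_j; apply/eqP; rewrite eqn_leq mpref_le_lev_cat andbT.
have /eqP lev_drop0 : lev (drop j y) (drop j y) == 0 by rewrite lev_eq0.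
have := leq_lev_cat p (drop j y) (take j y) (drop j y).
by rewrite cat_take_drop lev_j lev_drop0 addn0.
Qed.

Lemma lev_cat_eq_mpref p s y : lev (p ++ s) y = mpref p y ->
  exists j, [/\ j <= size y, lev p (take j y) = mpref p y & s = drop j y].
Proof.
move=> lev_ps; have [j le_jy lev_j] := lev_cat_split p s y.
have := mpref_le p y j le_jy; exists j; split => //; first by lia.
by apply/eqP; rewrite -lev_eq0; lia.
Qed.

End EditDistance.

Theorem mainTheorem2 (Sigma : finType) (ystar p : seq Sigma) :
  (forall s : seq Sigma, mpref p ystar <= lev (p ++ s) ystar) /\
  (exists s : seq Sigma, lev (p ++ s) ystar = mpref p ystar) /\
  (forall s : seq Sigma,
     lev (p ++ s) ystar = mpref p ystar <->
     exists j : nat, [/\ j <= size ystar,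
                         lev p (take j ystar) = mpref p ystar &
                         s = drop j ystar]).
Proof.
split; first by move=> s; apply: mpref_le_lev_cat.
split.
  have [j _ lev_j] := mpref_attained _ p ystar.
  by exists (drop j ystar); apply: lev_cat_drop.
move=> s; split; first exact: lev_cat_eq_mpref.
by case=> j [_ lev_j ->]; apply: lev_cat_drop.
Qed.
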